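(* Assume there exists a $1$-perfect code in $H(q+1,q)$. Let $f$ be a $(b,c)$-coloring of $H(n,q)$ with main eigenvalue $\lambda$ such that the set of vertices of color $1$ can be partitioned into $k$-faces. Then: (1) if $\lambda+k\le0$, then for every $t\in\{1,\dots,q\}$ there is a $(q(b+c)-tc,\ tc)$-coloring of $H(qn-\lambda-k,q)$, with main eigenvalue $\lambda-k(q-1)$; (2) if $\lambda\le k(q-1)$, then for every $t\in\{1,\dots,q\}$ there is a $(q(b+c)-tc,\ tc)$-coloring of $H(qn-\lambda+k(q-1),q)$, with main eigenvalue $\lambda+k(q-1)^2$.
   Context: The Hamming graph $H(n,q)$ has vertex set $\mathbb{Z}_q^n$, two vertices adjacent iff they differ in exactly one coordinate. A $k$-face is a set of vertices obtained by fixing $n-k$ coordinates and letting the other $k$ coordinates range over $\mathbb{Z}_q$. A $(b,c)$-coloring of $H(n,q)$ is a surjective map onto $\{1,2\}$ in which each color-1 vertex has exactly $b$ neighbours of color 2 and each color-2 vertex has exactly $c$ neighbours of color 1; its main eigenvalue is $\lambda=n(q-1)-(b+c)$. A $1$-perfect code in $H(n,q)$ is a set $C$ of vertices such that every radius-$1$ Hamming ball contains exactly one element of $C$. *)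

From HB Require Import structures.
From mathcomp Require Import all_boot all_order all_algebra.
Set Implicit Arguments. Unset Strict Implicit. Unset Printing Implicit Defensive.
Import Order.TTheory GRing.Theory Num.Theory.

(* Vertices of the Hamming graph H(n,q): words of length n over an alphabet
   of size q (Z_q is used only as a q-element set). *)
Definition hvert (n q : nat) := {ffun 'I_n -> 'I_q}.

Definition hdist (n q : nat) (x y : hvert n q) : nat := #|[set i | x i != y i]|.

Definition hadj (n q : nat) (x y : hvert n q) : bool := hdist x y == 1.

Definition perfect_code1 (n q : nat) (C : {set hvert n q}) : Prop :=
  forall x : hvert n q, #|[set y in C | hdist x y <= 1]| = 1.

(* A 2-coloring is encoded as f : hvert n q -> bool; color 1 = true,
   color 2 = false.  (b,c)-coloring: surjective, every color-1 vertex has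
   exactly b color-2 neighbours, every color-2 vertex has exactly c
   color-1 neighbours. *)
Definition bc_coloring (n q b c : nat) (f : hvert n q -> bool) : Prop :=
  [/\ (exists x, f x), (exists x, ~~ f x),
      (forall x, f x -> #|[set y | hadj x y & ~~ f y]| = b) &
      (forall x, ~~ f x -> #|[set y | hadj x y & f y]| = c)].

Definition main_eig (n q b c : nat) : int := (n * (q - 1))%:Z - (b + c)%:Z.

Definition kface (n q k : nat) (F : {set hvert n q}) : Prop :=
  exists (S : {set 'I_n}) (a : hvert n q),
    #|S| = k /\ F = [set x : hvert n q | [forall i : 'I_n, (i \notin S) ==> (x i == a i)]].

Definition kface_partitionable (n q k : nat) (f : hvert n q -> bool) : Prop :=
  exists P : {set {set hvert n q}},
    partition P [set x | f x] /\ (forall F, F \in P -> kface k F).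

(* Since 1 + (q+2)q = (q+1)^2, a 1-perfect code C in H(q+2, q+1) has (q+1)^q
   codewords at pairwise distance at least 3, so every assignment of all but
   two coordinates extends to exactly one codeword.  Hence each word w of
   H(q+1, q+1) determines the codeword agreeing with it on coordinates 1..q;
   this gives w a symbol (w_0 minus the codeword's coordinate 0) and a tag
   (the codeword's last coordinate).  Neighbours of w have other symbols,
   and every other symbol comes with every tag at exactly one neighbour.

   Replace each coordinate of H(n, q+1) by a block of q+1 coordinates and add
   r free coordinates.  Colour a vertex 1 when the symbols of its blocks form
   a vertex of colour 1 for f and its weight modulo q+1 (extra letters plus
   tags, except along the free directions of the k-face through that vertex,
   where a block adds its symbol or nothing) is below t.  Counting neighbours
   block by block with the gadget property gives a (q'(b+c) - tc, tc)-colouring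
   as soon as r + e k q' + n q = b + c + k q, with q' = q+1 and e = 1 or 0;
   the two cases of the theorem are the two choices of e. *)

From HB Require Import structures.
From mathcomp Require Import all_boot all_order all_algebra zify.
Import Order.TTheory GRing.Theory Num.Theory.

Set Implicit Arguments. Unset Strict Implicit. Unset Printing Implicit Defensive.

Lemma card_fibres (A K : finType) (F : A -> K) (P : pred A) :
  #|[set y | P y]| = \sum_s #|[set y | (F y == s) && P y]|.
Proof.
rewrite -sum1dep_card (partition_big F xpredT) //=.
apply: eq_bigr => s _; rewrite -sum1dep_card; apply: eq_bigl => y; by rewrite andbC.
Qed.

Lemma cards_predD1 (A : finType) (a : A) (P : pred A) :
  #|[set v | (v != a) && P v]| = #|[set v | P v]| - P a.
Proof.
rewrite (cardsD1 a [set v | P v]) inE.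
have -> : [set v | P v] :\ a = [set v | (v != a) && P v] by apply/setP=> v; rewrite !inE.
by case: (P a); rewrite ?add1n ?subSS ?subn0.
Qed.

Lemma cards_neq (A : finType) (a : A) : #|[set s | s != a]| = #|A|.-1.
Proof. by rewrite -(cardsC1 a); apply: eq_card => s; rewrite !inE. Qed.

Lemma sum_nat_bool_mul (A : finType) (Pr P : pred A) (K : nat) :
  \sum_(s | Pr s) (P s * K) = #|[set s | Pr s && P s]| * K.
Proof.
rewrite -sum1dep_card big_distrl /= big_mkcond [RHS]big_mkcond /=.
by apply: eq_bigr => s _; case: (Pr s); case: (P s); rewrite ?mul1n ?mul0n.
Qed.

Section Words.
Variables (J T : finType).
Implicit Types x y : {ffun J -> T}.

Definition wdist x y := #|[set i | x i != y i]|.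
Definition wadj x y := wdist x y == 1%N.
Definition fupd x (i : J) (v : T) : {ffun J -> T} :=
  [ffun j => if j == i then v else x j].

Lemma fupd_eq x i v : fupd x i v i = v.
Proof. by rewrite ffunE eqxx. Qed.

Lemma fupd_neq x i v j : j != i -> fupd x i v j = x j.
Proof. by rewrite ffunE => /negbTE ->. Qed.

Lemma fupd_id x i : fupd x i (x i) = x.
Proof. by apply/ffunP=> j; rewrite ffunE; case: eqP => // ->. Qed.

Lemma fupd_fupd x i v w : fupd (fupd x i v) i w = fupd x i w.
Proof. by apply/ffunP=> j; rewrite !ffunE; case: eqP. Qed.

Lemma wadj_fupd x i v : wadj x (fupd x i v) = (v != x i).
Proof.
rewrite /wadj /wdist; have [->|nv] := eqVneq v (x i).
  by rewrite fupd_id (_ : [set j | _] = set0) ?cards0 //; apply/setP=> j; rewrite !inE eqxx.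
suff -> : [set j | x j != fupd x i v j] = [set i] by rewrite cards1.
apply/setP=> j; rewrite !inE ffunE; have [->|nj] := eqVneq j i; last by rewrite eqxx.
by rewrite eq_sym nv.
Qed.

Lemma wadjP x y : wadj x y -> exists i, y = fupd x i (y i) /\ y i != x i.
Proof.
move=> /cards1P [i Hi].
have : i \in [set i] by rewrite inE.
rewrite -Hi inE eq_sym => ne; exists i; split => //.
apply/ffunP=> j; rewrite ffunE; case: eqP => [->//|/eqP nj].
apply/eqP; apply: contraR nj => nj; have : j \in [set i] by rewrite -Hi inE eq_sym.
by rewrite inE.
Qed.

Lemma card_wadj x (P : pred {ffun J -> T}) :
  #|[set y | wadj x y & P y]| = \sum_i #|[set v | (v != x i) && P (fupd x i v)]|.
Proof.
pose D := [set iv : J * T | (iv.2 != x iv.1) && P (fupd x iv.1 iv.2)].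
have -> : [set y | wadj x y & P y] = [set fupd x iv.1 iv.2 | iv in D].
  apply/setP=> y; rewrite inE; apply/andP/imsetP.
    case=> /wadjP [i [ey ne]] Py; exists (i, y i) => //.
    by rewrite inE /= ne -ey.
  case=> [[i v]]; rewrite inE /= => /andP [nv Pv] ->; split=> //.
  by rewrite wadj_fupd.
rewrite card_in_imset; last first.
  move=> [i v] [i' v']; rewrite !inE /= => /andP [nv _] /andP [nv' _] e.
  have ei : i = i'.
    apply/eqP; apply: contraR nv => ni.
    by have := congr1 (fun f : {ffun J -> T} => f i) e; rewrite fupd_eq fupd_neq // => ->.
  subst i'; by have := congr1 (fun f : {ffun J -> T} => f i) e; rewrite !fupd_eq => ->.
rewrite -sum1dep_card big_mkcond /=.
pose F i v := if (v != x i) && P (fupd x i v) then 1%N else 0%N.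
rewrite (eq_bigr (fun p => F p.1 p.2)) // -(pair_big xpredT xpredT F) /=.
apply eq_bigr => i _; rewrite -sum1dep_card [RHS]big_mkcond /=.
by apply eq_bigr => v _.
Qed.

Lemma exists_wadj_colors (f : {ffun J -> T} -> bool) x y : f x -> ~~ f y ->
  exists u v, [/\ ~~ f u, f v & wadj u v].
Proof.
move=> fx; elim: {y}(wdist x y) {-2}y (leqnn (wdist x y)) => [|m IH] y hm fy.
  move: fy; suff -> : y = x by rewrite fx.
  apply/ffunP=> i; apply/eqP; rewrite eq_sym; apply: contraTT hm => ne; rewrite -ltnNge card_gt0.
  by apply/set0Pn; exists i; rewrite inE.
have [/set0Pn [i]|e0] := boolP ([set i | x i != y i] != set0); last first.
  by apply: (IH y) => //; move: e0; rewrite negbK /wdist => /eqP ->; rewrite cards0.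
rewrite inE => ni.
have ad : wadj y (fupd y i (x i)) by rewrite wadj_fupd.
have [fy'|nfy'] := boolP (f (fupd y i (x i))); first by exists y, (fupd y i (x i)).
apply: (IH _) nfy'.
have sub : [set j | x j != fupd y i (x i) j] \subset [set j | x j != y j] :\ i.
  apply/subsetP=> j; rewrite !inE ffunE; have [->|nj] := eqVneq j i; by rewrite ?eqxx.
apply: leq_trans (subset_leq_card sub) _.
by move: hm; rewrite /wdist (cardsD1 i [set j | x j != y j]) inE ni.
Qed.

Lemma wdist_sym x y : wdist x y = wdist y x.
Proof. by apply: eq_card => i; rewrite !inE eq_sym. Qed.

Lemma wdist0 x y : (wdist x y == 0%N) = (x == y).
Proof.
rewrite cards_eq0; apply/eqP/eqP => [e | ->]; last by apply/setP=> i; rewrite !inE eqxx.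
by apply/ffunP=> i; apply/eqP; have := in_set0 i; rewrite -e inE => /negbFE.
Qed.

Lemma wdist_le1P x y : wdist x y <= 1 ->
  y = x \/ exists i, y i != x i /\ forall j, j != i -> y j = x j.
Proof.
rewrite leq_eqVlt ltnS leqn0 wdist0 orbC => /orP [/eqP -> | adj]; [by left | right].
have [i [ey ne]] := wadjP adj; exists i; split=> // j nj.
by rewrite ey fupd_neq.
Qed.

Lemma card_ball1 x : #|[set y | wdist x y <= 1]| = (#|J| * #|T|.-1).+1.
Proof.
have -> : [set y | wdist x y <= 1] = x |: [set y | wadj x y & true].
  apply/setP=> y; rewrite !inE andbT leq_eqVlt ltnS leqn0 wdist0 orbC eq_sym.
  by rewrite /wadj.
have nxx : wadj x x = false by rewrite /wadj (eqP (etrans (wdist0 x x) (eqxx x))).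
rewrite cardsU1 inE andbT nxx add1n card_wadj.
by rewrite (eq_bigr (fun _ => #|T|.-1)) ?sum_nat_const ?card_ord // => i _;
  rewrite -(cards_neq (x i)); apply: eq_card => v; rewrite !inE andbT.
Qed.
End Words.

Section PerfectCode.
Variable q : nat.
Local Notation V := {ffun 'I_q.+2 -> 'I_q.+1}.
Variable C : {set V}.
Hypothesis HC : perfect_code1 C.

Lemma covering_codeword x : exists2 c, c \in C & wdist x c <= 1.
Proof.
have /set0Pn [c] : [set y in C | hdist x y <= 1] != set0 by rewrite -card_gt0 HC.
by rewrite inE => /andP [cC le1]; exists c.
Qed.

Lemma perfect_code_card : (#|C| * q.+1 ^ 2 = q.+1 ^ q.+2)%N.
Proof.
have ball (c : V) : #|[set x | wdist c x <= 1]| = (q.+1 ^ 2)%N.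
  by rewrite card_ball1 !card_ord /=; lia.
have cV : #|{: V}| = (q.+1 ^ q.+2)%N by rewrite card_ffun !card_ord.
transitivity (\sum_(c in C) #|[set x | wdist c x <= 1]|).
  by rewrite (eq_bigr _ (fun c _ => ball c)) sum_nat_const.
rewrite -cV -sum1_card.
under [RHS]eq_bigr => x _ do rewrite -(HC x).
under eq_bigr => c _ do rewrite -sum1dep_card.
under [RHS]eq_bigr => x _ do rewrite -sum1dep_card.
rewrite (exchange_big_dep xpredT) //=; apply: eq_bigr => x _.
by apply: eq_bigl => c; rewrite wdist_sym.
Qed.

Lemma perfect_code_eq c c' : c \in C -> c' \in C -> wdist c c' <= 2 -> c = c'.
Proof.
move=> cC c'C d2; apply/eqP; apply/negPn/negP => ne.
(* a word halfway between c and c' lies in the radius-1 balls of both *)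
have [i ni] : exists i, c i != c' i.
  by apply/existsP; apply: contraR ne => /existsPn H; apply/eqP/ffunP=> i; apply/eqP/negPn.
pose v := fupd c i (c' i).
have cv : wdist v c <= 1.
  apply: (leq_trans (subset_leq_card (B := [set i]) _)); last by rewrite cards1.
  by apply/subsetP=> j; rewrite !inE ffunE; have [->|nj] := eqVneq j i; rewrite ?eqxx.
have c'v : wdist v c' <= 1.
  have : [set j | v j != c' j] \subset [set j | c j != c' j] :\ i.
    apply/subsetP=> j; rewrite !inE ffunE; have [->|nj] := eqVneq j i; first by rewrite eqxx.
    by move=> ->.
  move/subset_leq_card/leq_trans; apply.
  by move: d2; rewrite /wdist (cardsD1 i) inE ni add1n ltnS.
have : [set c; c'] \subset [set y in C | hdist v y <= 1].
  by apply/subsetP=> y; rewrite !inE; case/orP=> /eqP ->; rewrite ?cC ?c'C.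
by move/subset_leq_card; rewrite HC cards2 ne.
Qed.

Lemma perfect_code_eq_off2 c1 c2 (a b : 'I_q.+2) : c1 \in C -> c2 \in C ->
  (forall i, i != a -> i != b -> c1 i = c2 i) -> c1 = c2.
Proof.
move=> h1 h2 H; apply: perfect_code_eq => //.
have : [set i | c1 i != c2 i] \subset [set a; b].
  apply/subsetP=> k; rewrite !inE; apply: contraR; rewrite negb_or => /andP[ka kb].
  by rewrite H.
by move/subset_leq_card/leq_trans; apply; rewrite cards2; case: (_ != _).
Qed.

Lemma perfect_code_extend (u1 u2 : 'I_q.+2) (v : V) : u1 != u2 ->
  exists2 c, c \in C & forall i, i != u1 -> i != u2 -> c i = v i.
Proof.
move=> n12; pose Off := {i : 'I_q.+2 | (i != u1) && (i != u2)}.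
pose res (x : V) : {ffun Off -> 'I_q.+1} := [ffun i => x (val i)].
have cOff : #|{: Off}| = q.
  rewrite card_sig (eq_card (B := ~: [set u1; u2])) => [|i]; last by rewrite !inE negb_or.
  by have := cardsC [set u1; u2]; rewrite cards2 n12 card_ord; lia.
have cC : #|C| = (q.+1 ^ q)%N.
  by apply/eqP; rewrite -(eqn_pmul2r (expn_gt0 q.+1 2)) perfect_code_card -expnD addn2.
have res_eq x y i : res x = res y -> i != u1 -> i != u2 -> x i = y i.
  move=> e i1 i2; pose o : Off := exist _ i (introT andP (conj i1 i2)).
  by have := congr1 (fun r : {ffun Off -> 'I_q.+1} => r o) e; rewrite !ffunE.
have inj : {in C &, injective res}.
  move=> c1 c2 h1 h2 e.
  by apply: (perfect_code_eq_off2 (a := u1) (b := u2) h1 h2) => i; apply: res_eq.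
have : res v \in res @: C.
  have cimg : #|res @: C| = (q.+1 ^ q)%N by rewrite card_in_imset // cC.
  have cAll : #|{: {ffun Off -> 'I_q.+1}}| = (q.+1 ^ q)%N.
    by rewrite card_ffun; congr (_ ^ _); [exact: card_ord | exact: cOff].
  have /eqP -> : res @: C == setT by rewrite eqEcard subsetT cardsT cimg; apply/eq_leq/cAll.
  by rewrite inE.
by case/imsetP=> c cC' ev; exists c => // i; apply: res_eq.
Qed.

End PerfectCode.

Section Gadget.
Variable q : nat.
Local Notation V := {ffun 'I_q.+2 -> 'I_q.+1}.
Local Notation W := {ffun 'I_q.+1 -> 'I_q.+1}.
Variable C : {set V}.
Hypothesis HC : perfect_code1 C.

Definition emb (p : 'I_q.+1) : 'I_q.+2 := widen_ord (leqnSn q.+1) p.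

Lemma emb_inj : injective emb.
Proof. by move=> p p' /(congr1 val) /= /val_inj. Qed.

Lemma emb_neq_max p : emb p != ord_max.
Proof. by rewrite -val_eqE /= neq_ltn ltn_ord. Qed.

Lemma emb_eq0 p : (emb p == ord0) = (p == ord0).
Proof. by rewrite -!val_eqE. Qed.

Lemma inord_emb p : inord (emb p) = p.
Proof. by apply/val_inj; rewrite /= inordK. Qed.

Lemma emb_inord (i : 'I_q.+2) : i != ord_max -> emb (inord i) = i.
Proof.
move=> ni; apply/val_inj; rewrite /= inordK //.
by have := ltn_ord i; move: ni; rewrite -val_eqE /= ltnS leq_eqVlt => /negbTE ->.
Qed.

(* The default value of the pick is never reached (gcodeP). *)
Definition agrees (c : V) (w : W) := [forall p, (p != ord0) ==> (c (emb p) == w p)].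
Definition gcode (w : W) : V := odflt [ffun=> ord0] [pick c in C | agrees c w].

Definition gsym (w : W) : 'I_q.+1 := (w ord0 - gcode w ord0)%R.
Definition gtag (w : W) : 'I_q.+1 := gcode w ord_max.

Lemma agreesP (c : V) (w : W) :
  reflect (forall p, p != ord0 -> c (emb p) = w p) (agrees c w).
Proof.
apply: (iffP forallP) => H p; first by move=> p0; have := H p; rewrite p0 => /eqP.
by apply/implyP=> /H ->.
Qed.

Lemma gcodeP (w : W) : gcode w \in C /\ agrees (gcode w) w.
Proof.
rewrite /gcode; case: pickP => [c /andP[]// | none].
have n0m : (ord0 : 'I_q.+2) != ord_max by rewrite -val_eqE.
have [c cC Hc] := perfect_code_extend HC [ffun i : 'I_q.+2 => w (inord i)] n0m.
have cw : agrees c w.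
  by apply/agreesP=> p p0; rewrite Hc ?ffunE ?inord_emb ?emb_eq0 ?emb_neq_max.
by move: (none c); rewrite cC cw.
Qed.

Lemma gcode_emb (w : W) p : p != ord0 -> gcode w (emb p) = w p.
Proof. by have [_ /agreesP] := gcodeP w; apply. Qed.

Lemma gcode_uniq (c : V) (w : W) : c \in C -> agrees c w -> gcode w = c.
Proof.
move=> cC /agreesP cw; have [wC _] := gcodeP w.
apply: (@perfect_code_eq_off2 _ _ HC _ _ ord0 ord_max) => // i i0 im.
by rewrite -(emb_inord im) gcode_emb ?cw // -emb_eq0 emb_inord.
Qed.

Lemma gcode_fupd0 (w : W) a : gcode (fupd w ord0 a) = gcode w.
Proof.
have [wC _] := gcodeP w; apply: gcode_uniq => //.
by apply/agreesP=> p p0; rewrite fupd_neq // gcode_emb.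
Qed.

Lemma gsym_fupd0 (w : W) a : gsym (fupd w ord0 a) = (a - gcode w ord0)%R.
Proof. by rewrite /gsym gcode_fupd0 fupd_eq. Qed.

Lemma gcode_eq_off (w1 w2 : W) p : p != ord0 ->
  (forall p', p' != p -> w1 p' = w2 p') -> gcode w1 ord0 = gcode w2 ord0 -> gcode w1 = gcode w2.
Proof.
move=> p0 e e0; have [h1 _] := gcodeP w1; have [h2 _] := gcodeP w2.
apply: (@perfect_code_eq_off2 _ _ HC _ _ (emb p) ord_max) => // i ip im.
have [->|i0] := eqVneq i ord0; first by [].
rewrite -(emb_inord im) !gcode_emb -?emb_eq0 ?emb_inord //; apply: e.
by apply: contra ip => /eqP <-; rewrite emb_inord.
Qed.

Lemma gsym_fupd_inj (w : W) p v1 v2 :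
  gsym (fupd w p v1) = gsym (fupd w p v2) -> v1 = v2.
Proof.
have [-> | p0] := eqVneq p ord0; first by rewrite !gsym_fupd0 => /addIr.
have n0 : ord0 != p by rewrite eq_sym.
rewrite /gsym !(fupd_neq _ _ n0) => /addrI/oppr_inj e0.
have := gcode_eq_off p0 (fun p' h => etrans (fupd_neq w v1 h) (esym (fupd_neq w v2 h))) e0.
by move/(congr1 (fun c : V => c (emb p))); rewrite !gcode_emb // !fupd_eq.
Qed.

Lemma gsym_wadj (w w' : W) : wadj w w' -> gsym w != gsym w'.
Proof.
case/wadjP=> p [-> nv]; apply: contra nv => /eqP e.
by apply/eqP/(gsym_fupd_inj (w := w) (p := p)); rewrite fupd_eq fupd_id e.
Qed.

Lemma card_wadj_gsym_le (w : W) s : #|[set w' | wadj w w' & gsym w' == s]| <= q.+1.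
Proof.
rewrite card_wadj (leq_trans _ (eq_leq (card_ord q.+1))) // -sum1_card.
apply: leq_sum => p _.
apply/card_le1_eqP => v1 v2; rewrite !inE => /andP[_ /eqP e1] /andP[_ /eqP e2].
by apply: (gsym_fupd_inj (w := w) (p := p)); rewrite e1 e2.
Qed.

Lemma wadj_gsym_gtag (w : W) s h : s != gsym w ->
  exists w', [/\ wadj w w', gsym w' = s & gtag w' = h].
Proof.
move=> ns; have [eh|nh] := eqVneq h (gtag w).
  exists (fupd w ord0 (s + gcode w ord0)%R); split.
  - by rewrite wadj_fupd; apply: contra ns => /eqP e; rewrite /gsym -e addrK.
  - by rewrite gsym_fupd0 addrK.
  - by rewrite /gtag gcode_fupd0 eh.
have n0m : (ord0 : 'I_q.+2) != ord_max by rewrite -val_eqE.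
pose x : V := [ffun i => if i == ord0 then (w ord0 - s)%R
                          else if i == ord_max then h else w (inord i)].
have x0 : x ord0 = (w ord0 - s)%R by rewrite ffunE eqxx.
have xm : x ord_max = h by rewrite ffunE eq_sym (negbTE n0m) eqxx.
have xe p : p != ord0 -> x (emb p) = w p.
  by move=> p0; rewrite ffunE emb_eq0 (negbTE p0) (negbTE (emb_neq_max p)) inord_emb.
have [c cC /wdist_le1P [cx | [i [ni ci]]]] := covering_codeword HC x.
  have cw : gcode w = c by apply: gcode_uniq => //; apply/agreesP=> p p0; rewrite cx xe.
  by move: nh; rewrite /gtag cw cx xm eqxx.
have cw : (forall p, p != ord0 -> emb p != i) -> gcode w = c.
  by move=> hi; apply: gcode_uniq => //; apply/agreesP=> p p0; rewrite ci ?xe ?hi.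
have cm : i != ord_max -> c ord_max = h by move=> im; rewrite ci 1?eq_sym.
have [i0|i0] := eqVneq i ord0.
  have cw0 : gcode w = c by apply: cw => p p0; rewrite i0 emb_eq0.
  by move: nh; rewrite /gtag cw0 cm ?eqxx // i0.
have c0 : c ord0 = (w ord0 - s)%R by rewrite ci 1?eq_sym.
have [im|im] := eqVneq i ord_max.
  have cw0 : gcode w = c by apply: cw => p _; rewrite im emb_neq_max.
  by move: ns; rewrite /gsym cw0 c0 subKr eqxx.
pose p : 'I_q.+1 := inord i.
have ip : emb p = i by rewrite emb_inord.
have p0 : p != ord0 by rewrite -emb_eq0 ip.
have cw' : gcode (fupd w p (c i)) = c.
  apply: gcode_uniq => //; apply/agreesP=> p' p'0; have [-> | np] := eqVneq p' p.
    by rewrite ip fupd_eq.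
  by rewrite fupd_neq // ci ?xe // -ip; apply: contra np => /eqP /emb_inj ->.
exists (fupd w p (c i)); split.
- by rewrite wadj_fupd -(xe p p0) ip.
- by rewrite /gsym cw' c0 fupd_neq 1?eq_sym // subKr.
- by rewrite /gtag cw' cm.
Qed.

Lemma card_wadj_gsym_gtag (w : W) s (R : pred 'I_q.+1) : s != gsym w ->
  #|[set w' | wadj w w' & (gsym w' == s) && R (gtag w')]| = #|[set u | R u]|.
Proof.
move=> ns; set N := [set w' | wadj w w' & gsym w' == s].
have tagN u : u \in gtag @: N.
  have [w' [a b c]] := wadj_gsym_gtag u ns; apply/imsetP; exists w' => //.
  by rewrite inE a b eqxx.
have inj : {in N &, injective gtag}.
  have tagT : gtag @: N = setT by apply/setP=> u; rewrite inE tagN.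
  apply/imset_injP; rewrite eqn_leq leq_imset_card tagT cardsT card_ord.
  exact: card_wadj_gsym_le.
rewrite -(card_in_imset (f := gtag)); last first.
  move=> a b; rewrite !inE => /and3P[wa sa _] /and3P[wb sb _].
  by apply: inj; rewrite inE ?wa ?wb.
apply: eq_card => u; rewrite [in RHS]inE; apply/imsetP/idP => [[w'] | Ru].
  by rewrite !inE => /andP[_ /andP[_ Rw]] ->.
have /imsetP [w' wN eu] := tagN u; exists w' => //.
by move: wN; rewrite !inE -eu Ru => /andP[-> ->].
Qed.
End Gadget.

Section Blowup.
Variables (n q : nat).
Local Notation Q := 'I_q.+1.
Local Notation X := {ffun 'I_n -> 'I_q.+1}.
Local Notation W := {ffun 'I_q.+1 -> 'I_q.+1}.
Variable C : {set {ffun 'I_q.+2 -> 'I_q.+1}}.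
Hypothesis HC : perfect_code1 C.
Variable f : X -> bool.
Variable D : X -> {set 'I_n}.
Hypothesis Hface : forall x j v, f x -> j \in D x -> f (fupd x j v) /\ D (fupd x j v) = D x.
Variables (e : bool) (r : nat) (T : {set Q}).

Local Notation YY := {ffun ('I_n * 'I_q.+1 + 'I_r)%type -> 'I_q.+1}.
Definition block (Y : YY) j : W := [ffun p => Y (inl (j, p))].
Definition proj (Y : YY) : X := [ffun j => gsym C (block Y j)].
Definition contrib (d : bool) (w : W) : Q := if d then (if e then gsym C w else 0%R) else gtag C w.
Definition zsum (Y : YY) : Q := (\sum_z Y (inr z))%R.
Definition weight (Y : YY) : Q := (\sum_j contrib (j \in D (proj Y)) (block Y j) + zsum Y)%R.
Definition blowup (Y : YY) : bool := f (proj Y) && (weight Y \in T).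
Definition setblock (Y : YY) j (w : W) : YY :=
  [ffun i => match i with inl (j', p) => if j' == j then w p else Y i | inr _ => Y i end].

Lemma fupd_inl Y j p v : fupd Y (inl (j,p)) v = setblock Y j (fupd (block Y j) p v).
Proof.
apply/ffunP=> [[[j' p']|z]]; rewrite !ffunE //.
have [->|nj] := eqVneq j' j; have [->|np] := eqVneq p' p; rewrite ?eqxx //= ?ffunE.
- by case: eqP => // -[ep]; move: np; rewrite ep eqxx.
- by case: eqP => // -[ej]; move: nj; rewrite ej eqxx.
- by case: eqP => // -[ej ep]; move: nj; rewrite ej eqxx.
Qed.

Lemma block_setblock Y j w j' :
  block (setblock Y j w) j' = if j' == j then w else block Y j'.
Proof. by apply/ffunP=> p; rewrite !ffunE; case: eqP => // ; rewrite ffunE. Qed.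

Lemma proj_setblock Y j w : proj (setblock Y j w) = fupd (proj Y) j (gsym C w).
Proof. by apply/ffunP=> j'; rewrite !ffunE block_setblock; case: eqP. Qed.

Lemma zsum_setblock Y j w : zsum (setblock Y j w) = zsum Y.
Proof. by apply: eq_bigr => z _; rewrite ffunE. Qed.

Lemma proj_block Y j : proj Y j = gsym C (block Y j).
Proof. by rewrite ffunE. Qed.

Definition weight_off (Y : YY) j (x' : X) : Q :=
  (\sum_(j' | j' != j) contrib (j' \in D x') (block Y j') + zsum Y)%R.

Lemma weight_setblock Y j w : let x' := fupd (proj Y) j (gsym C w) in
  weight (setblock Y j w) = (weight_off Y j x' + contrib (j \in D x') w)%R.
Proof.
rewrite /weight /weight_off proj_setblock zsum_setblock (bigD1 j) //= block_setblock eqxx.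
rewrite [RHS]addrC addrA; congr (_ + _ + _)%R.
by apply: eq_bigr => j' nj; rewrite block_setblock (negbTE nj).
Qed.

Lemma weight_split Y j :
  weight Y = (weight_off Y j (proj Y) + contrib (j \in D (proj Y)) (block Y j))%R.
Proof. by rewrite /weight /weight_off (bigD1 j) //= [RHS]addrC addrA. Qed.

Lemma proj_fupd_inr Y z v : proj (fupd Y (inr z) v) = proj Y.
Proof.
by apply/ffunP=> j; rewrite !ffunE; congr (gsym C _); apply/ffunP=> p; rewrite !ffunE.
Qed.

Lemma weight_fupd_inr Y z v : weight (fupd Y (inr z) v) = (weight Y - Y (inr z) + v)%R.
Proof.
rewrite /weight proj_fupd_inr.
have eb j : block (fupd Y (inr z) v) j = block Y j by apply/ffunP=> p; rewrite !ffunE.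
under eq_bigr => j _ do rewrite eb.
rewrite /zsum (bigD1 z) //= [in RHS](bigD1 z) //= ffunE eqxx.
have -> : (\sum_(i | i != z) fupd Y (inr z) v (inr i) = \sum_(i | i != z) Y (inr i))%R.
  apply: eq_bigr => i ni; rewrite ffunE; case: eqP => // -[ei]; by rewrite ei eqxx in ni.
set a := (\sum_(j < n) _)%R; set b := (\sum_(i < r | i != z) _)%R.
by rewrite [(Y (inr z) + b)%R]addrC [in RHS]addrA addrK [(v + b)%R]addrC addrA.
Qed.

Definition tcount (b : bool) : nat := if b then #|T| else q.+1 - #|T|.

Lemma card_addr_mem (A0 : Q) b : #|[set u : Q | (A0 + u \in T)%R == b]| = tcount b.
Proof.
have inj : injective (+%R A0) by apply: addrI.
case: b => /=.
  have -> : [set u : Q | (A0 + u \in T)%R == true] = (+%R A0) @^-1: T.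
    by apply/setP=> u; rewrite !inE eqb_id.
  by rewrite card_preimset.
have -> : [set u : Q | (A0 + u \in T)%R == false] = ~: ((+%R A0) @^-1: T).
  by apply/setP=> u; rewrite !inE eqbF_neg.
have := cardsC ((+%R A0) @^-1: T); rewrite card_preimset // card_ord.
move=> E; rewrite -[X in X - _]E addKn; by apply: eq_card.
Qed.

Lemma cards_const (b : bool) : #|[set u : Q | b]| = (b * q.+1)%N.
Proof.
case: b; last by rewrite mul0n; apply/eqP; rewrite cards_eq0; apply/eqP/setP=> u; rewrite !inE.
by rewrite mul1n -[RHS](card_ord q.+1); apply: eq_card => u; rewrite inE.
Qed.

(* Number of neighbours of Y in block j with new symbol s' and colour b: by
   the gadget property the candidates are q+1 words realising each tag once. *)
Definition block_count (Y : YY) j (s' : Q) b : nat :=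
  let x' := fupd (proj Y) j s' in
  if f x' then (if j \in D x' then
      ((((weight_off Y j x' + (if e then s' else 0)) \in T)%R == b) * q.+1)%N
    else tcount b)
  else ((~~ b) * q.+1)%N.

Lemma card_nbr_block Y j b :
  #|[set w | wadj (block Y j) w & blowup (setblock Y j w) == b]|
    = \sum_(s' | s' != proj Y j) block_count Y j s' b.
Proof.
rewrite (card_fibres (gsym C)) (bigD1 (proj Y j)) //=.
set N0 := [set w | _ && _]; have -> : #|N0| = 0.
  apply/eqP; rewrite cards_eq0; apply/eqP/setP => w; rewrite !inE proj_block.
  by apply/negbTE; apply/negP => /and3P [/eqP ew ad _]; move: (gsym_wadj HC ad); rewrite ew eqxx.
rewrite add0n; apply: eq_bigr => s' ns.
rewrite proj_block in ns.
pose x' := fupd (proj Y) j s'.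
pose a u := (weight_off Y j x' + (if j \in D x' then (if e then s' else 0) else u))%R.
pose R u := (f x' && (a u \in T)) == b.
have -> : [set w | (gsym C w == s') && (wadj (block Y j) w && (blowup (setblock Y j w) == b))]
    = [set w | wadj (block Y j) w & (gsym C w == s') && R (gtag C w)].
  apply/setP=> w; rewrite !inE.
  have [ew|new] := eqVneq (gsym C w) s'; last by rewrite /= andbF.
  by rewrite /= /blowup proj_setblock weight_setblock ew /R /a /contrib ew.
rewrite (card_wadj_gsym_gtag HC R ns) /block_count -/x' /R /a.
case: (f x'); case: (j \in D x') => /=; rewrite ?card_addr_mem ?cards_const //; by case: b.
Qed.

Definition nbr_count (Y : YY) b := #|[set Y' | wadj Y Y' & blowup Y' == b]|.
Definition coord_count (Y : YY) i b := #|[set v | (v != Y i) && (blowup (fupd Y i v) == b)]|.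

Lemma nbr_count_blocks Y b : nbr_count Y b =
  (\sum_j \sum_(s' | s' != proj Y j) block_count Y j s' b + \sum_z coord_count Y (inr z) b)%N.
Proof.
rewrite /nbr_count card_wadj big_sumType /=; congr (_ + _)%N.
rewrite (eq_bigr (fun jp => coord_count Y (inl (jp.1, jp.2)) b)); last by case.
rewrite -(pair_bigA _ (fun j p => coord_count Y (inl (j, p)) b)) /=.
apply: eq_bigr => j _; rewrite -card_nbr_block card_wadj.
by apply: eq_bigr => p _; apply: eq_card => v; rewrite !inE fupd_inl ffunE.
Qed.

Lemma coord_count_inr (Y : YY) (z : 'I_r) (b : bool) : coord_count Y (inr z) b =
  if f (proj Y) then tcount b - ((weight Y \in T) == b) else ((~~b) * q)%N.
Proof.
pose a v := (weight Y - Y (inr z) + v)%R.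
have -> : coord_count Y (inr z) b
           = #|[set v | (v != Y (inr z)) && ((f (proj Y) && (a v \in T)) == b)]|.
  by apply: eq_card => v; rewrite !inE /blowup proj_fupd_inr weight_fupd_inr.
rewrite (cards_predD1 (Y (inr z)) (fun v => (f (proj Y) && (a v \in T)) == b)) /= /a subrK.
case: (f (proj Y)) => /=.
  rewrite -(card_addr_mem (weight Y - Y (inr z))%R b); by congr (_ - _).
have -> : (false == b) = ~~ b by case: b.
rewrite (_ : #|_| = #|[set u : Q | ~~ b]|); last by apply: eq_card => v; rewrite !inE; case: b.
rewrite cards_const; case: b => /=; by rewrite ?mul1n ?mul0n ?subn1.
Qed.

Definition deg1 (x : X) j := #|[set s' | (s' != x j) && f (fupd x j s')]|.
Definition deg2 (x : X) j := #|[set s' | (s' != x j) && ~~ f (fupd x j s')]|.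

Lemma deg1_deg2 x j : (deg1 x j + deg2 x j = q)%N.
Proof.
rewrite /deg1 /deg2 -!sum1dep_card.
rewrite -(bigID (fun s' => f (fupd x j s')) (fun s' => s' != x j) (fun _ => 1%N)) /=.
by rewrite sum1dep_card cards_neq card_ord.
Qed.

Lemma sum_deg1 x : (\sum_j deg1 x j = #|[set x' | wadj x x' & f x']|)%N.
Proof. by rewrite card_wadj. Qed.
Lemma sum_deg2 x : (\sum_j deg2 x j = #|[set x' | wadj x x' & ~~ f x']|)%N.
Proof. by rewrite card_wadj. Qed.

Lemma deg_face x j : f x -> j \in D x -> deg1 x j = q /\ deg2 x j = 0%N.
Proof.
move=> fx jx.
have b0 : deg2 x j = 0%N.
  apply/eqP; rewrite cards_eq0; apply/eqP/setP=> s'; rewrite !inE.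
  by have [-> _] := Hface s' fx jx; rewrite andbF.
by split=> //; have := deg1_deg2 x j; rewrite b0 addn0.
Qed.

Lemma face_fupd_back x j s' : f (fupd x j s') -> j \in D (fupd x j s') ->
  f x /\ D x = D (fupd x j s').
Proof. by move=> fx jx; have := Hface (x j) fx jx; rewrite fupd_fupd fupd_id. Qed.

Definition free_count x j b : nat := deg1 x j * tcount b + deg2 x j * ((~~ b) * q.+1).
Definition face_count Y b : nat := let hit := (weight Y \in T) == b in
  if e then q.+1 * (tcount b - hit) else q * (hit * q.+1).

Lemma sum_block_count_free Y j b : ~~ (f (proj Y) && (j \in D (proj Y))) ->
  \sum_(s' | s' != proj Y j) block_count Y j s' b = free_count (proj Y) j b.
Proof.
move=> hj.
have E s' : s' != proj Y j -> block_count Y j s' b =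
    (f (fupd (proj Y) j s') * tcount b + (~~ f (fupd (proj Y) j s')) * ((~~b) * q.+1))%N.
  move=> ns; rewrite /block_count; case fx: (f _) => /=; last by rewrite mul0n add0n mul1n.
  case dx: (j \in D _); last by rewrite mul1n mul0n addn0.
  have [fx0 ex] := face_fupd_back fx dx.
  by move: hj; rewrite fx0 ex dx.
by rewrite (eq_bigr _ E) big_split /= !sum_nat_bool_mul.
Qed.

Lemma sum_block_count_face Y j b : f (proj Y) -> j \in D (proj Y) ->
  \sum_(s' | s' != proj Y j) block_count Y j s' b = face_count Y b.
Proof.
move=> hf hj; rewrite /face_count.
pose A := (weight Y - (if e then proj Y j else 0))%R.
have E s' : block_count Y j s' b = ((((A + (if e then s' else 0))%R \in T) == b) * q.+1)%N.
  have [fx' dx'] := Hface s' hf hj.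
  rewrite /block_count fx' dx' hj; congr (nat_of_bool (_ == b) * _)%N; congr (_ \in T).
  by congr (_ + _)%R; rewrite /A (weight_split Y j) /weight_off dx' /contrib hj -proj_block addrK.
rewrite (eq_bigr _ (fun s' _ => E s')) sum_nat_bool_mul.
have [He|He] := boolP e.
  rewrite mulnC (cards_predD1 (proj Y j) (fun s' => ((A + s')%R \in T) == b)).
  rewrite -(card_addr_mem A b) {2}/A He subrK; congr (_ * (_ - _))%N.
rewrite /A (negbTE He) subr0 addr0; case: ((weight Y \in T) == b) => /=.
  rewrite (_ : #|_| = #|[set s' | s' != proj Y j]|); last first.
    by apply: eq_card => u; rewrite !inE andbT.
  by rewrite cards_neq card_ord mul1n.
rewrite (_ : #|_| = 0%N) ?muln0 //; apply/eqP; rewrite cards_eq0; apply/eqP/setP=> u.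
by rewrite !inE andbF.
Qed.

Lemma nbr_count_off Y b : ~~ f (proj Y) ->
  nbr_count Y b = ((\sum_j deg1 (proj Y) j) * tcount b
                   + (\sum_j deg2 (proj Y) j) * ((~~b) * q.+1) + r * ((~~b) * q))%N.
Proof.
move=> nf; rewrite nbr_count_blocks.
rewrite (eq_bigr (free_count (proj Y) ^~ b)); last first.
  by move=> j _; rewrite sum_block_count_free // (negbTE nf).
rewrite big_split /= -!big_distrl /= [\sum_(z < r) _](eq_bigr (fun _ => ((~~b) * q)%N)).
  by rewrite sum_nat_const card_ord.
by move=> z _; rewrite coord_count_inr (negbTE nf).
Qed.

Lemma nbr_count_on Y b : f (proj Y) ->
  nbr_count Y b = (#|D (proj Y)| * face_count Y b
     + ((\sum_(j | j \notin D (proj Y)) deg1 (proj Y) j) * tcount b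
        + (\sum_(j | j \notin D (proj Y)) deg2 (proj Y) j) * ((~~b) * q.+1))
     + r * (tcount b - ((weight Y \in T) == b)))%N.
Proof.
move=> fx; rewrite nbr_count_blocks (bigID (fun j => j \in D (proj Y))) /=.
rewrite (eq_bigr (fun _ => face_count Y b)); last by move=> j jD; rewrite sum_block_count_face.
rewrite sum_nat_const (eq_bigr (free_count (proj Y) ^~ b)); last first.
  by move=> j jD; rewrite sum_block_count_free // (negbTE jD) andbF.
rewrite big_split /= -!big_distrl /=.
rewrite [\sum_(z < r) _](eq_bigr (fun _ => tcount b - ((weight Y \in T) == b))%N).
  by rewrite sum_nat_const card_ord.
by move=> z _; rewrite coord_count_inr fx.
Qed.

Lemma sum_deg1_split x : f x -> (\sum_j deg1 x j = #|D x| * q + \sum_(j | j \notin D x) deg1 x j)%N.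
Proof.
move=> fx; rewrite (bigID (fun j => j \in D x)) /=; congr (_ + _)%N.
rewrite (eq_bigr (fun _ => q)); first by rewrite sum_nat_const.
by move=> j jD; have [-> _] := deg_face fx jD.
Qed.

Lemma sum_deg2_split x : f x -> (\sum_j deg2 x j = \sum_(j | j \notin D x) deg2 x j)%N.
Proof.
move=> fx; rewrite (bigID (fun j => j \in D x)) /=.
rewrite big1 ?add0n // => j jD; by have [_ ->] := deg_face fx jD.
Qed.

Lemma sum_deg1_deg2 x : (\sum_j deg1 x j + \sum_j deg2 x j = n * q)%N.
Proof.
rewrite -big_split /= (eq_bigr (fun _ => q)); last by move=> j _; rewrite deg1_deg2.
by rewrite sum_nat_const card_ord.
Qed.

Variables (b0 c0 k : nat).
Hypothesis Hb : forall x, f x -> #|[set x' | wadj x x' & ~~ f x']| = b0.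
Hypothesis Hc : forall x, ~~ f x -> #|[set x' | wadj x x' & f x']| = c0.
Hypothesis Hk : forall x, f x -> #|D x| = k.
Hypothesis Hr : (r + e * (k * q.+1) + n * q = c0 + b0 + k * q)%N.
Hypothesis Ht : #|T| <= q.+1.

Lemma nbr_count1_off Y : ~~ f (proj Y) -> nbr_count Y true = (#|T| * c0)%N.
Proof.
move=> nf; rewrite nbr_count_off // sum_deg1 Hc //= /tcount; lia.
Qed.

Lemma c_off_face x : f x -> c0 = (e * (k * q.+1) + \sum_(j | j \notin D x) deg1 x j + r)%N.
Proof.
move=> fx; have := sum_deg1_deg2 x; rewrite sum_deg1_split // sum_deg2 Hb // Hk //; lia.
Qed.

Lemma sum_deg2_off_face x : f x -> (\sum_(j | j \notin D x) deg2 x j = b0)%N.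
Proof. by move=> fx; rewrite -sum_deg2_split // sum_deg2 Hb. Qed.

Lemma nbr_count1_out Y : f (proj Y) -> weight Y \notin T -> nbr_count Y true = (#|T| * c0)%N.
Proof.
move=> fx hT; rewrite nbr_count_on // /face_count (negbTE hT) Hk //= /tcount subn0.
by rewrite (c_off_face fx) sum_deg2_off_face //; case: e => /=; nia.
Qed.

Lemma nbr_count2_in Y : f (proj Y) -> weight Y \in T ->
  nbr_count Y false = (q.+1 * b0 + (q.+1 - #|T|) * c0)%N.
Proof.
move=> fx hT; rewrite nbr_count_on // /face_count hT Hk //= /tcount subn0.
by rewrite (c_off_face fx) sum_deg2_off_face //; case: e => /=; nia.
Qed.
End Blowup.

Definition wbc_coloring (J T : finType) (b c : nat) (g : {ffun J -> T} -> bool) : Prop :=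
  [/\ (exists x, g x), (exists x, ~~ g x),
      (forall x, g x -> #|[set y | wadj x y & ~~ g y]| = b) &
      (forall x, ~~ g x -> #|[set y | wadj x y & g y]| = c)].

Section Relabel.
Variables (J : finType) (q : nat).
Local Notation Y := {ffun J -> 'I_q}.
Local Notation HV := (hvert #|J| q).

Definition of_hvert (y : HV) : Y := [ffun a => y (enum_rank a)].
Definition to_hvert (x : Y) : HV := [ffun i => x (enum_val i)].

Lemma of_hvertK : cancel of_hvert to_hvert.
Proof. by move=> y; apply/ffunP=> i; rewrite !ffunE enum_valK. Qed.

Lemma to_hvertK : cancel to_hvert of_hvert.
Proof. by move=> x; apply/ffunP=> a; rewrite !ffunE enum_rankK. Qed.

Lemma wadj_of_hvert (x y : HV) : wadj (of_hvert x) (of_hvert y) = hadj x y.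
Proof.
rewrite /hadj /hdist /wadj /wdist; congr (_ == _).
rewrite -(card_imset _ (@enum_rank_inj J)); apply: eq_card => i; rewrite !inE.
apply/imsetP/idP => [[a] | ne]; first by rewrite inE !ffunE => h ->.
by exists (enum_val i); rewrite ?inE ?enum_valK // !ffunE enum_valK.
Qed.

Lemma card_hadj_of_hvert (x : HV) (P : pred Y) :
  #|[set y | hadj x y & P (of_hvert y)]| = #|[set z | wadj (of_hvert x) z & P z]|.
Proof.
rewrite -(card_imset _ (can_inj of_hvertK)); apply: eq_card => z; rewrite !inE.
apply/imsetP/idP => [[y] | h].
  by rewrite inE -wadj_of_hvert => /andP[a b] ->; rewrite a b.
by exists (to_hvert z); rewrite ?to_hvertK // inE -wadj_of_hvert to_hvertK.
Qed.

Lemma bc_coloring_of_hvert b c (g : Y -> bool) : wbc_coloring b c g ->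
  bc_coloring b c (fun y : HV => g (of_hvert y)).
Proof.
case=> [[x gx] [y gy] Hb Hc]; split.
- by exists (to_hvert x); rewrite to_hvertK.
- by exists (to_hvert y); rewrite to_hvertK.
- by move=> z gz; rewrite (card_hadj_of_hvert z (fun z => ~~ g z)) Hb.
- by move=> z gz; rewrite (card_hadj_of_hvert z g) Hc.
Qed.
End Relabel.

Section Faces.
Variables (n Q k : nat) (f : hvert n Q -> bool) (P : {set {set hvert n Q}}).
Hypothesis HP : partition P [set x | f x].
Hypothesis HF : forall F, F \in P -> kface k F.

Definition face_dirs (F : {set hvert n Q}) : {set 'I_n} :=
  odflt set0 [pick S : {set 'I_n} | [exists a : hvert n Q,
     (#|S| == k) && (F == [set y : hvert n Q | [forall i, (i \notin S) ==> (y i == a i)]])]].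
Definition face_dir (x : hvert n Q) := face_dirs (pblock P x).

Lemma face_dirsP F : F \in P -> #|face_dirs F| = k /\
  exists a : hvert n Q,
    F = [set y : hvert n Q | [forall i, (i \notin face_dirs F) ==> (y i == a i)]].
Proof.
move=> FP; rewrite /face_dirs; case: pickP => [S /existsP [a /andP [/eqP cS /eqP eF]] | H] /=.
  by split=> //; exists a.
exfalso; have [S [a [cS eF]]] := HF FP; move: (H S) => /negbT /existsPn /(_ a).
by rewrite cS eF !eqxx.
Qed.

Lemma pblock_face x : f x -> pblock P x \in P /\ x \in pblock P x.
Proof.
move: HP => /and3P [/eqP cov tr _] fx.
have xc : x \in cover P by rewrite cov inE.
by rewrite pblock_mem // mem_pblock.
Qed.

Lemma card_face_dir x : f x -> #|face_dir x| = k.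
Proof. by move=> fx; have [FP _] := pblock_face fx; have [] := face_dirsP FP. Qed.

Lemma face_dir_fupd x j v : f x -> j \in face_dir x ->
  f (fupd x j v) /\ face_dir (fupd x j v) = face_dir x.
Proof.
move=> fx jD; move: HP => /and3P [/eqP cov tr _].
have [FP xF] := pblock_face fx.
have [_ [a eF]] := face_dirsP FP.
rewrite /face_dir in jD; move: eF; set S := face_dirs (pblock P x) => eF.
have uF : fupd x j v \in pblock P x.
  move: xF; rewrite eF !inE => /forallP h; apply/forallP=> i.
  apply/implyP=> iS; rewrite ffunE; have [ej|nj] := eqVneq i j.
    by move: iS; rewrite ej jD.
  by have := h i; rewrite iS.
have fu : f (fupd x j v).
  have : fupd x j v \in cover P by apply/bigcupP; exists (pblock P x).
  by rewrite cov inE.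
split=> //; rewrite /face_dir (def_pblock tr FP uF) //.
Qed.
End Faces.

Lemma card_ord_lt q t : t <= q -> #|[set a : 'I_q | a < t]| = t.
Proof.
move=> tq; have winj : injective (widen_ord tq) by move=> i j /(congr1 val) /= /val_inj.
rewrite -[RHS](card_ord t) -(card_imset _ winj); apply: eq_card => a; rewrite !inE.
apply/idP/imsetP => [lt | [a' _ ->]]; last by rewrite /= ltn_ord.
by exists (Ordinal lt) => //; apply/val_inj.
Qed.

Section BlowupColoring.
Variables (n q b c k : nat).
Variable C : {set {ffun 'I_q.+2 -> 'I_q.+1}}.
Hypothesis HC : perfect_code1 C.
Variable f : hvert n q.+1 -> bool.
Hypothesis Hbc : bc_coloring b c f.
Variable P : {set {set hvert n q.+1}}.
Hypothesis HP : partition P [set x | f x].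
Hypothesis HF : forall F, F \in P -> kface k F.

Local Notation D := (face_dir k P).

Definition gword (s : 'I_q.+1) : {ffun 'I_q.+1 -> 'I_q.+1} :=
  fupd [ffun=> ord0] ord0 (s + gcode C [ffun=> ord0] ord0)%R.

Definition embed_vertex r (x : hvert n q.+1) : {ffun ('I_n * 'I_q.+1 + 'I_r)%type -> 'I_q.+1} :=
  [ffun i => match i with inl (j, p) => gword (x j) p | inr _ => ord0 end].

Lemma proj_embed_vertex r x : proj C (embed_vertex r x) = x.
Proof.
apply/ffunP=> j; rewrite ffunE.
have -> : block (embed_vertex r x) j = gword (x j) by apply/ffunP=> p; rewrite !ffunE.
by rewrite (gsym_fupd0 HC) addrK.
Qed.

Lemma blowup_bc_coloring (e : bool) (r : nat) :
  r + e * (k * q.+1) + n * q = c + b + k * q -> forall t, 1 <= t <= q.+1 ->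
  exists2 m, m = n * q.+1 + r &
    exists g : hvert m q.+1 -> bool, bc_coloring (q.+1 * (b + c) - t * c) (t * c) g.
Proof.
move=> Hr t /andP [t1 tq].
set T := [set a : 'I_q.+1 | a < t].
have cT : #|T| = t by rewrite card_ord_lt.
have Ht : #|T| <= q.+1 by rewrite cT.
have [[x0 fx0] [y0 fy0] Hb Hc] : wbc_coloring b c f := Hbc.
have Hk x : f x -> #|D x| = k by exact: card_face_dir HP HF x.
have Hface := face_dir_fupd HP HF.
exists #|{: 'I_n * 'I_q.+1 + 'I_r}|; first by rewrite card_sum card_prod !card_ord.
exists (fun y => blowup C f D e T (of_hvert y)); apply: bc_coloring_of_hvert; split.
- have [u [v [nfu fv uv]]] := exists_wadj_colors fx0 fy0.
  have c_gt0 : 0 < c by rewrite -(Hc u nfu) card_gt0; apply/set0Pn; exists v; rewrite inE uv fv.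
  have := nbr_count1_off HC Hface Hc Hr Ht (Y := embed_vertex r u).
  rewrite proj_embed_vertex cT => /(_ nfu) cnt.
  have : 0 < nbr_count C f D e T (embed_vertex r u) true by rewrite cnt muln_gt0 t1.
  by rewrite card_gt0 => /set0Pn [Y']; rewrite inE => /andP [_ /eqP gY]; exists Y'.
- by exists (embed_vertex r y0); rewrite /blowup proj_embed_vertex (negbTE fy0).
- move=> Y /andP [fY hT]; have := nbr_count2_in HC Hface Hb Hk Hr Ht fY hT.
  rewrite cT /nbr_count (eq_card (B := [set Y' | wadj Y Y' & ~~ blowup C f D e T Y'])).
    by move=> ->; nia.
  by move=> Y'; rewrite !inE eqbF_neg.
- move=> Y nG; rewrite (_ : #|_| = nbr_count C f D e T Y true); last first.
    by apply: eq_card => Y'; rewrite !inE eqb_id.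
  have [fY|nfY] := boolP (f (proj C Y)); last by rewrite (nbr_count1_off HC Hface Hc Hr Ht nfY) cT.
  have hT : weight C D e Y \notin T by move: nG; rewrite /blowup fY.
  by rewrite (nbr_count1_out HC Hface Hb Hk Hr Ht fY hT) cT.
Qed.
End BlowupColoring.

Lemma bc_coloring_alphabet_gt0 n q b c (f : hvert n q -> bool) : bc_coloring b c f -> 0 < q.
Proof.
case: q f => // f [[x fx] [y fy] _ _].
have exy : x = y by apply/ffunP=> i; case: (x i).
by move: fy; rewrite -exy fx.
Qed.

Local Open Scope ring_scope.

Lemma main_eig_blowup n q b c r t : (t <= q.+1)%N ->
  main_eig (n * q.+1 + r) q.+1 (q.+1 * (b + c) - t * c) (t * c)
    = q.+1%:Z * main_eig n q.+1 b c + (r * q)%:Z.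
Proof.
move=> tq; have : (t * c <= q.+1 * (b + c))%N by apply: leq_mul; rewrite ?leq_addl.
rewrite /main_eig !subn1 /=; nia.
Qed.

Theorem theorem7 (q n b c k : nat) (f : hvert n q -> bool) :
  (exists C : {set hvert q.+1 q}, perfect_code1 C) ->
  bc_coloring b c f ->
  kface_partitionable k f ->
  let lam := main_eig n q b c in
  (lam + k%:Z <= 0 ->
     forall t : nat, (1 <= t <= q)%N ->
       exists m : nat,
         m%:Z = (q * n)%:Z - lam - k%:Z /\
         exists g : hvert m q -> bool,
           bc_coloring (q * (b + c) - t * c) (t * c) g /\
           main_eig m q (q * (b + c) - t * c) (t * c)
             = lam - (k * (q - 1))%:Z)
  /\
  (lam <= (k * (q - 1))%:Z ->
     forall t : nat, (1 <= t <= q)%N ->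
       exists m : nat,
         m%:Z = (q * n)%:Z - lam + (k * (q - 1))%:Z /\
         exists g : hvert m q -> bool,
           bc_coloring (q * (b + c) - t * c) (t * c) g /\
           main_eig m q (q * (b + c) - t * c) (t * c)
             = lam + (k * (q - 1) ^ 2)%:Z).
Proof.
move=> [C HC] Hbc [P [HP HF]] lam.
case: q C HC f Hbc P HP HF @lam => [|q] C HC f Hbc P HP HF lam.
  by have := bc_coloring_alphabet_gt0 Hbc.
have blow := blowup_bc_coloring HC Hbc HP HF.
rewrite /lam; split=> Hl t /[dup] Ht /andP[_ tq].
- have Hle : (n * q + k <= b + c)%N by move: Hl; rewrite /main_eig subn1 /=; lia.
  have [|m -> [g Hg]] := blow true (b + c - (n * q + k))%N _ t Ht; first by lia.
  exists (n * q.+1 + (b + c - (n * q + k)))%N; split; first by rewrite /main_eig subn1; lia.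
  by exists g; split=> //; rewrite main_eig_blowup // /main_eig !subn1 /=; nia.
- have Hle : (n * q <= k * q + b + c)%N by move: Hl; rewrite /main_eig subn1 /=; lia.
  have [|m -> [g Hg]] := blow false (k * q + b + c - n * q)%N _ t Ht; first by lia.
  exists (n * q.+1 + (k * q + b + c - n * q))%N; split; first by rewrite /main_eig subn1; lia.
  by exists g; split=> //; rewrite main_eig_blowup // /main_eig !subn1 /=; nia.
Qed.
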